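(* Let $I\subset\mathbb{R}$ be an open interval and $W\subset I$ a countable subset which is dense in $I$; let $\check I$ be the fractured interval of $I$ at $W$. Then the sets $[a^R,b^L]\cap\check I$ for $a<b$ in $W$ form a basis for the topology of $\check I$, and each of these sets is homeomorphic to the Cantor set.
   Context: The divided interval of $I$ at $W$ is the set $\hat I = \{w^{L}, \hat w, w^{R} : w\in W\}\sqcup (I\smallsetminus W)$, with $\pi\colon\hat I\to I$ sending $w^L,\hat w,w^R$ to $w$ and fixing $I\smallsetminus W$, totally ordered so that $\pi$ is order preserving and $w^L<\hat w<w^R$. For $a,b\in\hat I\cup\{\pm\infty\}$, $(a,b)=\{s: a<s<b\}$; basis intervals are the nonempty $(a,b)$ other than those with $a=w^L$ or $b=w^R$ ($w\in W$), and they generate the topology of $\hat I$. The fractured interval is $\check I = \hat I\smallsetminus\{\hat w: w\in W\}$ with the subspace topology; $[a^R,b^L]=\{s: a^R\le s\le b^L\}$. *)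

From Stdlib Require Import Reals.
Open Scope R_scope.

Definition topology (T : Type) := (T -> Prop) -> Prop.

Definition subspace {T : Type} (tau : topology T) (P : T -> Prop)
  : topology {x : T | P x} :=
  fun V => exists U, tau U /\ forall x : {x : T | P x}, V x <-> U (proj1_sig x).

Definition continuous {X Y : Type} (tX : topology X) (tY : topology Y)
  (f : X -> Y) : Prop :=
  forall V, tY V -> tX (fun x => V (f x)).

Definition homeomorphic {X Y : Type} (tX : topology X) (tY : topology Y) : Prop :=
  exists (f : X -> Y) (g : Y -> X),
    (forall x, g (f x) = x) /\ (forall y, f (g y) = y) /\
    continuous tX tY f /\ continuous tY tX g.

Definition R_open : topology R :=
  fun U => forall x, U x -> exists eps, 0 < eps /\
     forall y, Rabs (y - x) < eps -> U y.

Definition Cantor (x : R) : Prop :=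
  exists d : nat -> bool,
    infinite_sum (fun i => (if d i then 2 else 0) / 3 ^ (S i)) x.

Definition is_open_interval (I : R -> Prop) : Prop :=
  exists lo hi : option R, forall x,
    I x <-> ((match lo with None => True | Some l => l < x end) /\
             (match hi with None => True | Some h => x < h end)).

Definition countable_set (W : R -> Prop) : Prop :=
  exists f : {x : R | W x} -> nat, forall p q, f p = f q -> p = q.

Definition dense_in (W I : R -> Prop) : Prop :=
  forall U, R_open U -> (exists x, I x /\ U x) -> exists w, W w /\ I w /\ U w.

Inductive tag := TL | TM | TR.   (* w^L, \hat w, w^R ; points of I \ W carry TM *)

Definition tag_lt (s t : tag) : Prop :=
  match s, t with
  | TL, TM | TL, TR | TM, TR => True
  | _, _ => False
  end.

Definition hatI (I W : R -> Prop) : Type :=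
  {p : R * tag | I (fst p) /\ (W (fst p) \/ snd p = TM)}.

Definition hpt {I W : R -> Prop} (s : hatI I W) : R * tag := proj1_sig s.

Definition plt (p q : R * tag) : Prop :=
  fst p < fst q \/ (fst p = fst q /\ tag_lt (snd p) (snd q)).
Definition ple (p q : R * tag) : Prop := plt p q \/ p = q.

Inductive ext (X : Type) := NegInf | Pt (x : X) | PosInf.
Arguments NegInf {X}. Arguments Pt {X} x. Arguments PosInf {X}.

Definition ext_lt {I W : R -> Prop} (a b : ext (hatI I W)) : Prop :=
  match a, b with
  | NegInf, Pt _ | NegInf, PosInf | Pt _, PosInf => True
  | Pt s, Pt t => plt (hpt s) (hpt t)
  | _, _ => False
  end.

Definition oint {I W : R -> Prop} (a b : ext (hatI I W)) (s : hatI I W) : Prop :=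
  ext_lt a (Pt s) /\ ext_lt (Pt s) b.

Definition basis_interval {I W : R -> Prop} (a b : ext (hatI I W)) : Prop :=
  (exists s, oint a b s) /\
  (forall s, a = Pt s -> snd (hpt s) <> TL) /\
  (forall s, b = Pt s -> snd (hpt s) <> TR).

Definition hat_open (I W : R -> Prop) : topology (hatI I W) :=
  fun U => forall s, U s -> exists a b, basis_interval a b /\ oint a b s /\
     forall t, oint a b t -> U t.

Definition in_check (I W : R -> Prop) (s : hatI I W) : Prop :=
  ~ (W (fst (hpt s)) /\ snd (hpt s) = TM).

Definition checkI (I W : R -> Prop) : Type := {s : hatI I W | in_check I W s}.

Definition check_open (I W : R -> Prop) : topology (checkI I W) :=
  subspace (hat_open I W) (in_check I W).

Definition closed_seg (I W : R -> Prop) (a b : R) (s : checkI I W) : Prop :=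
  ple (a, TR) (hpt (proj1_sig s)) /\ ple (hpt (proj1_sig s)) (b, TL).

(* The basis property: a basic interval (p, q) of the divided interval around a point s of
   the fractured interval, whose ends are not of the form w^L or w^R, contains some
   [a^R, b^L] around s with a, b in W, by density of W; conversely [a^R, b^L] is the trace
   on the fractured interval of the basic interval (\hat a, \hat b), hence open.

   The Cantor set: enumerate W and split [a^R, b^L] again and again at the point w of W of
   least index inside the current interval [l^R, r^L], keeping [l^R, w^L] or [w^R, r^L].
   Every w in W is eventually used as a cut, so distinct points get distinct binary
   addresses, and the points sharing the first n address bits are those of one stage-n
   interval, which is open: the address map is continuous with continuous inverse.  Every
   address is realised, by the supremum of its left ends, suitably tagged.  Reading the
   address as a {0,2}-ternary expansion gives the homeomorphism with the Cantor set. *)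

From Stdlib Require Import Reals Lra Lia Wf_nat.
From Stdlib Require Import Classical ClassicalEpsilon ProofIrrelevance FunctionalExtensionality.
Open Scope R_scope.

(** * The order of the divided interval *)

Lemma plt_trans p q r : plt p q -> plt q r -> plt p r.
Proof.
  destruct p as [x s], q as [y t], r as [z u]; unfold plt; simpl.
  intros [H|[H1 H2]] [H'|[H1' H2']]; subst; try (left; lra).
  right; split; auto. destruct s, t, u; simpl in *; tauto.
Qed.

Lemma plt_irrefl p : ~ plt p p.
Proof.
  destruct p as [x s]; unfold plt; simpl.
  intros [H|[_ H]]; [lra | destruct s; simpl in H; auto].
Qed.

Lemma plt_asym p q : plt p q -> ~ plt q p.
Proof. intros H H'. apply (plt_irrefl p). eapply plt_trans; eauto. Qed.

Lemma ple_plt_trans p q r : ple p q -> plt q r -> plt p r.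
Proof. intros [H|H] H'; [eapply plt_trans; eauto | subst; auto]. Qed.

Lemma plt_ple_trans p q r : plt p q -> ple q r -> plt p r.
Proof. intros H [H'|H']; [eapply plt_trans; eauto | subst; auto]. Qed.

Lemma ple_trans p q r : ple p q -> ple q r -> ple p r.
Proof. intros [H|H] H'; [left; eapply plt_ple_trans; eauto | subst; auto]. Qed.

Lemma plt_total p q : plt p q \/ p = q \/ plt q p.
Proof.
  destruct p as [x s], q as [y t]; unfold plt; simpl.
  destruct (Rtotal_order x y) as [H|[H|H]]; [left; left; auto | | right; right; left; auto].
  subst. destruct s, t; simpl; tauto.
Qed.

Lemma not_plt_ple p q : ~ plt q p -> ple p q.
Proof. intros H. destruct (plt_total p q) as [H1|[H1|H1]]; [left|right|]; tauto. Qed.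

Lemma ple_same_tag x y t : x <= y -> ple (x, t) (y, t).
Proof. intros [H|H]; [left; left; auto | right; subst; auto]. Qed.

Lemma ple_TR_TL x y : ple (x, TR) (y, TL) -> x < y.
Proof. intros [[H|[H H']]|H]; simpl in *; [auto | tauto | discriminate]. Qed.

Lemma plt_TR_TM x y : plt (x, TR) (y, TM) -> x < y.
Proof. intros [H|[_ H]]; simpl in *; [auto | tauto]. Qed.

Lemma plt_TM_TL x y : plt (x, TM) (y, TL) -> x < y.
Proof. intros [H|[_ H]]; simpl in *; [auto | tauto]. Qed.

Lemma plt_TM_ple_TR x s : plt (x, TM) s -> ple (x, TR) s.
Proof.
  destruct s as [y t]; unfold plt, ple; simpl. intros [H|[H1 H2]]; [left; left; auto|].
  subst. destruct t; simpl in H2; try tauto; right; auto.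
Qed.

Lemma plt_TM_ple_TL x s : plt s (x, TM) -> ple s (x, TL).
Proof.
  destruct s as [y t]; unfold plt, ple; simpl. intros [H|[H1 H2]]; [left; left; auto|].
  subst. destruct t; simpl in H2; try tauto; right; auto.
Qed.

Lemma plt_TM_le_l x y s : x <= y -> plt (y, TM) s -> plt (x, TM) s.
Proof. intros H. apply ple_plt_trans, ple_same_tag, H. Qed.

Lemma plt_TM_le_r x y s : x <= y -> plt s (x, TM) -> plt s (y, TM).
Proof. intros H H'. eapply plt_ple_trans; [exact H' | apply ple_same_tag, H]. Qed.

Lemma ple_TR_plt_TM x s : ple (x, TR) s -> plt (x, TM) s.
Proof. apply plt_ple_trans. right; simpl; auto. Qed.

Lemma ple_TL_plt_TM x s : ple s (x, TL) -> plt s (x, TM).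
Proof. intros H. eapply ple_plt_trans; [exact H | right; simpl; auto]. Qed.

(** * Density of W *)

Section Interval.
Variables I W : R -> Prop.
Hypothesis HI : is_open_interval I.
Hypothesis HWd : dense_in W I.

Lemma open_interval_convex x y z : I x -> I y -> x <= z <= y -> I z.
Proof.
  destruct HI as [lo [hi H]]. rewrite !H. intros [A B] [C D] E.
  split; [destruct lo | destruct hi]; auto; lra.
Qed.

Lemma open_interval_left x p : I x -> p < x -> exists z, I z /\ p < z < x.
Proof.
  destruct HI as [lo [hi H]]. intros Hx Hp. pose proof Hx as [A B]%H.
  set (m := match lo with Some l => Rmax p l | None => p end).
  assert (Hm : m < x /\ p <= m /\ match lo with Some l => l <= m | None => True end).
  { unfold m; destruct lo as [l|]; auto using Rle_refl.
    split; [apply Rmax_lub_lt; lra | split; [apply Rmax_l | apply Rmax_r]]. }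
  exists ((x + m) / 2). split; [|lra]. apply H. split.
  - destruct lo; [lra | auto].
  - destruct hi; [lra | auto].
Qed.

Lemma open_interval_right x p : I x -> x < p -> exists z, I z /\ x < z < p.
Proof.
  destruct HI as [lo [hi H]]. intros Hx Hp. pose proof Hx as [A B]%H.
  set (m := match hi with Some h => Rmin p h | None => p end).
  assert (Hm : x < m /\ m <= p /\ match hi with Some h => m <= h | None => True end).
  { unfold m; destruct hi as [h|]; auto using Rle_refl.
    split; [apply Rmin_glb_lt; lra | split; [apply Rmin_l | apply Rmin_r]]. }
  exists ((x + m) / 2). split; [|lra]. apply H. split.
  - destruct lo; [lra | auto].
  - destruct hi; [lra | auto].
Qed.

Lemma W_between x y z : I z -> x < z < y -> exists w, W w /\ x < w < y.
Proof.
  intros Hz Hr.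
  destruct (HWd (fun u => x < u < y)) as [w [Hw [_ Hu]]]; [| exists z; auto | exists w; auto].
  intros u Hu. exists (Rmin (u - x) (y - u)). split; [apply Rmin_glb_lt; lra|].
  intros v Hv%Rabs_def2.
  pose proof (Rmin_l (u - x) (y - u)). pose proof (Rmin_r (u - x) (y - u)). lra.
Qed.

Lemma W_left x p : I x -> p < x -> exists w, W w /\ p < w < x.
Proof.
  intros Hx Hp. destruct (open_interval_left x p Hx Hp) as [z [Hz Hr]].
  apply (W_between p x z); auto; lra.
Qed.

Lemma W_right x p : I x -> x < p -> exists w, W w /\ x < w < p.
Proof.
  intros Hx Hp. destruct (open_interval_right x p Hx Hp) as [z [Hz Hr]].
  apply (W_between x p z); auto; lra.
Qed.

End Interval.

(** * The basis [a^R, b^L] *)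

Definition locally_basic {I W : R -> Prop} {X : Type} (j : X -> hatI I W) (V : X -> Prop) : Prop :=
  forall x, V x -> exists p q, basis_interval p q /\ oint p q (j x) /\
    forall x', oint p q (j x') -> V x'.

Lemma subspace_locally_basic {I W : R -> Prop} {X : Type} (j : X -> hatI I W)
    (tau : topology X) (P : X -> Prop) :
  (forall V, tau V <-> locally_basic j V) ->
  forall V, subspace tau P V <-> locally_basic (fun x : {x | P x} => j (proj1_sig x)) V.
Proof.
  intros Htau V. split.
  - intros [U [HU HV]] x Hx%HV. destruct (proj1 (Htau U) HU _ Hx) as [p [q [Hb [Ho Hall]]]].
    exists p, q. split; [auto | split; auto]. intros x' Hx'. apply HV, Hall, Hx'.
  - intros HV. exists (fun y => exists p q, basis_interval p q /\ oint p q (j y) /\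
        forall x' : {x | P x}, oint p q (j (proj1_sig x')) -> V x').
    split.
    + apply Htau. intros y [p [q [Hb [Ho Hall]]]]. exists p, q.
      split; [auto | split; auto]. intros y' Hy'. exists p, q; auto.
    + intros x. split; [apply HV|]. intros [p [q [_ [Ho Hall]]]]. apply Hall, Ho.
Qed.

Lemma check_openP I W V : check_open I W V <-> locally_basic (fun t : checkI I W => proj1_sig t) V.
Proof. apply (subspace_locally_basic (fun s => s)). reflexivity. Qed.

Lemma basis_interval_lower {I W : R -> Prop} (p : ext (hatI I W)) (s : hatI I W) :
  (forall pp, p = Pt pp -> snd (hpt pp) <> TL) -> ext_lt p (Pt s) ->
  exists l, snd l <> TL /\ plt l (hpt s) /\ forall s', plt l (hpt s') -> ext_lt p (Pt s').
Proof.
  intros Hp Hlt. destruct p as [|pp|]; simpl in Hlt; [| | tauto].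
  - exists (fst (hpt s) - 1, TM). repeat split; [discriminate | left; simpl; lra].
  - exists (hpt pp). auto.
Qed.

Lemma basis_interval_upper {I W : R -> Prop} (q : ext (hatI I W)) (s : hatI I W) :
  (forall qq, q = Pt qq -> snd (hpt qq) <> TR) -> ext_lt (Pt s) q ->
  exists u, snd u <> TR /\ plt (hpt s) u /\ forall s', plt (hpt s') u -> ext_lt (Pt s') q.
Proof.
  intros Hq Hlt. destruct q as [|qq|]; simpl in Hlt; [tauto | |].
  - exists (hpt qq). auto.
  - exists (fst (hpt s) + 1, TM). repeat split; [discriminate | left; simpl; lra].
Qed.

Lemma hpt_in_hat {I W : R -> Prop} (s : hatI I W) :
  I (fst (hpt s)) /\ (W (fst (hpt s)) \/ snd (hpt s) = TM).
Proof. exact (proj2_sig s). Qed.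

Section Basis.
Variables I W : R -> Prop.
Hypothesis HI : is_open_interval I.
Hypothesis HWI : forall w, W w -> I w.
Hypothesis HWd : dense_in W I.

Lemma W_TR_between l s : I (fst s) -> W (fst s) \/ snd s = TM -> snd l <> TL -> plt l s ->
  exists w, W w /\ plt l (w, TR) /\ ple (w, TR) s.
Proof.
  destruct l as [z u], s as [x t]; simpl. intros Ix Hx Hu Hlt.
  destruct (classic (t = TR)) as [->|Ht].
  - destruct Hx as [Wx|]; [|discriminate]. exists x. split; [auto | split; [auto | right; auto]].
  - unfold plt in Hlt; destruct Hlt as [Hlt|[Hz Htag]]; simpl in *.
    + destruct (W_left I W HI HWd x z Ix Hlt) as [w [Hw Hr]].
      exists w. split; [auto | split; [left | left; left]; simpl; lra].
    + destruct u, t; simpl in Htag; tauto.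
Qed.

Lemma W_TL_between s u : I (fst s) -> W (fst s) \/ snd s = TM -> snd u <> TR -> plt s u ->
  exists w, W w /\ ple s (w, TL) /\ plt (w, TL) u.
Proof.
  destruct u as [z v], s as [x t]; simpl. intros Ix Hx Hv Hlt.
  destruct (classic (t = TL)) as [->|Ht].
  - destruct Hx as [Wx|]; [|discriminate]. exists x. split; [auto | split; [right; auto | auto]].
  - unfold plt in Hlt; destruct Hlt as [Hlt|[Hz Htag]]; simpl in *.
    + destruct (W_right I W HI HWd x z Ix Hlt) as [w [Hw Hr]].
      exists w. split; [auto | split; [left; left | left]; simpl; lra].
    + destruct v, t; simpl in Htag; tauto.
Qed.

Lemma basis_interval_lower_W (p : ext (hatI I W)) (s : hatI I W) :
  (forall pp, p = Pt pp -> snd (hpt pp) <> TL) -> ext_lt p (Pt s) ->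
  exists w, W w /\ ple (w, TR) (hpt s) /\ forall s', ple (w, TR) (hpt s') -> ext_lt p (Pt s').
Proof.
  intros Hp Hlt. destruct (basis_interval_lower p s Hp Hlt) as [l [Hl [Hls Hall]]].
  destruct (hpt_in_hat s) as [Is Hs].
  destruct (W_TR_between l (hpt s) Is Hs Hl Hls) as [w [Hw [Hlw Hws]]].
  exists w. split; [auto | split; auto]. intros s' Hs'. apply Hall. eapply plt_ple_trans; eauto.
Qed.

Lemma basis_interval_upper_W (q : ext (hatI I W)) (s : hatI I W) :
  (forall qq, q = Pt qq -> snd (hpt qq) <> TR) -> ext_lt (Pt s) q ->
  exists w, W w /\ ple (hpt s) (w, TL) /\ forall s', ple (hpt s') (w, TL) -> ext_lt (Pt s') q.
Proof.
  intros Hq Hlt. destruct (basis_interval_upper q s Hq Hlt) as [u [Hu [Hsu Hall]]].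
  destruct (hpt_in_hat s) as [Is Hs].
  destruct (W_TL_between (hpt s) u Is Hs Hu Hsu) as [w [Hw [Hsw Hwu]]].
  exists w. split; [auto | split; auto]. intros s' Hs'. apply Hall. eapply ple_plt_trans; eauto.
Qed.

Definition hat_of x (Hx : I x) : hatI I W := exist _ (x, TM) (conj Hx (or_intror eq_refl)).

Lemma basis_interval_hat x y (Hx : I x) (Hy : I y) s :
  oint (Pt (hat_of x Hx)) (Pt (hat_of y Hy)) s ->
  basis_interval (Pt (hat_of x Hx)) (Pt (hat_of y Hy)).
Proof.
  intros Hs. split; [exists s; auto|].
  split; intros t Ht; injection Ht; intros <-; simpl; discriminate.
Qed.

Lemma closed_seg_open a b : W a -> W b -> check_open I W (closed_seg I W a b).
Proof.
  intros Wa Wb. apply check_openP. intros t [Ha Hb].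
  assert (Ho : oint (Pt (hat_of a (HWI a Wa))) (Pt (hat_of b (HWI b Wb))) (proj1_sig t)).
  { split; [apply ple_TR_plt_TM, Ha | apply ple_TL_plt_TM, Hb]. }
  exists (Pt (hat_of a (HWI a Wa))), (Pt (hat_of b (HWI b Wb))).
  split; [eapply basis_interval_hat; eauto | split; auto].
  intros t' [H1 H2]. split; [apply plt_TM_ple_TR | apply plt_TM_ple_TL]; auto.
Qed.

Lemma closed_seg_lt a b s : ple (a, TR) s -> ple s (b, TL) -> a < b.
Proof. intros H1 H2. apply ple_TR_TL, (ple_trans _ s); auto. Qed.

Lemma closed_seg_basis V : check_open I W V -> forall t, V t ->
  exists a b, W a /\ W b /\ a < b /\ closed_seg I W a b t /\
    forall t', closed_seg I W a b t' -> V t'.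
Proof.
  intros HV t Ht.
  destruct (proj1 (check_openP I W V) HV t Ht) as [p [q [[_ [Hp Hq]] [[Hpt Htq] Hall]]]].
  destruct (basis_interval_lower_W p _ Hp Hpt) as [a [Wa [Ha Ha']]].
  destruct (basis_interval_upper_W q _ Hq Htq) as [b [Wb [Hb Hb']]].
  exists a, b. repeat split; auto; [eapply closed_seg_lt; eauto|].
  intros t' [H1 H2]. apply Hall. split; auto.
Qed.

End Basis.

(** * Ternary expansions *)

Definition ternary_digit (d : nat -> bool) (i : nat) : R := (if d i then 2 else 0) / 3 ^ (S i).
Definition ternary_sum (d : nat -> bool) (N : nat) : R := sum_f_R0 (ternary_digit d) N.

Lemma inv_pow3_pos n : 0 < / 3 ^ n.
Proof. apply Rinv_0_lt_compat, pow_lt; lra. Qed.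

Lemma inv_pow3_S n : / 3 ^ (S n) = / 3 ^ n / 3.
Proof. simpl. field. apply pow_nonzero. lra. Qed.

Lemma inv_pow3_le m n : (m <= n)%nat -> / 3 ^ n <= / 3 ^ m.
Proof. intros H. apply Rinv_le_contravar; [apply pow_lt; lra | apply Rle_pow; [lra | auto]]. Qed.

Lemma inv_pow3_small eps : 0 < eps -> exists n, / 3 ^ n < eps.
Proof.
  intros He. destruct (pow_lt_1_zero (/ 3) ltac:(rewrite Rabs_pos_eq; lra) eps He) as [N HN].
  exists N. specialize (HN N (le_n N)). rewrite pow_inv, Rabs_pos_eq in HN; auto.
  left; apply inv_pow3_pos.
Qed.

Lemma ternary_digit_bounds d i : 0 <= ternary_digit d i <= 2 * / 3 ^ (S i).
Proof.
  unfold ternary_digit, Rdiv. pose proof (inv_pow3_pos (S i)). destruct (d i); split; nra.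
Qed.

Lemma ternary_sum_growing d : Un_growing (ternary_sum d).
Proof. intros n. unfold ternary_sum. simpl. pose proof (ternary_digit_bounds d (S n)). lra. Qed.

Lemma ternary_sum_tail d n m : (n <= m)%nat ->
  ternary_sum d m - ternary_sum d n <= / 3 ^ (S n) - / 3 ^ (S m).
Proof.
  induction 1; [lra|]. unfold ternary_sum in *; simpl sum_f_R0.
  pose proof (ternary_digit_bounds d (S m)). rewrite (inv_pow3_S (S m)) in *. lra.
Qed.

Lemma ternary_sum_bounded d : has_ub (ternary_sum d).
Proof.
  exists 1. intros x [n ->]. pose proof (ternary_sum_tail d 0 n (Nat.le_0_l n)).
  pose proof (ternary_digit_bounds d 0). pose proof (inv_pow3_pos (S n)).
  unfold ternary_sum in *; simpl in *. lra.
Qed.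

Definition ternary (d : nat -> bool) : R :=
  proj1_sig (growing_cv (ternary_sum d) (ternary_sum_growing d) (ternary_sum_bounded d)).

Lemma ternary_cv d : Un_cv (ternary_sum d) (ternary d).
Proof. unfold ternary. destruct growing_cv; auto. Qed.

Lemma ternary_between d n : ternary_sum d n <= ternary d <= ternary_sum d n + / 3 ^ (S n).
Proof.
  split; [exact (growing_ineq _ _ (ternary_sum_growing d) (ternary_cv d) n)|].
  apply (Rle_cv_lim (Un := ternary_sum d) (Vn := fun _ => ternary_sum d n + / 3 ^ (S n)));
    [| apply ternary_cv |].
  - intros m. destruct (Nat.le_ge_cases n m) as [H|H].
    + pose proof (ternary_sum_tail d n m H). pose proof (inv_pow3_pos (S m)). lra.
    + pose proof (tech9 _ (ternary_sum_growing d) m n H).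
      pose proof (inv_pow3_pos (S n)). lra.
  - intros eps He. exists 0%nat. intros. unfold Rdist. rewrite Rminus_diag, Rabs_R0. lra.
Qed.

Lemma ternary_sum_eq d e N : (forall i, (i <= N)%nat -> d i = e i) ->
  ternary_sum d N = ternary_sum e N.
Proof. intros H. apply sum_eq. intros i Hi. unfold ternary_digit. rewrite H; auto. Qed.

Lemma ternary_close d e n : (forall i, (i < n)%nat -> d i = e i) ->
  Rabs (ternary d - ternary e) <= / 3 ^ n.
Proof.
  intros H.
  pose proof (ternary_between d (Nat.pred n)). pose proof (ternary_between e (Nat.pred n)).
  destruct n as [|n]; simpl Nat.pred in *.
  - pose proof (ternary_digit_bounds d 0). pose proof (ternary_digit_bounds e 0).
    unfold ternary_sum in *; simpl in *. apply Rabs_le. lra.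
  - rewrite (ternary_sum_eq d e n) in * by (intros; apply H; lia). apply Rabs_le. lra.
Qed.

Lemma ternary_separate d e k : (forall i, (i < k)%nat -> d i = e i) -> d k = true -> e k = false ->
  / 3 ^ (S k) <= ternary d - ternary e.
Proof.
  intros H Hd He.
  assert (Hk : ternary_sum d k - ternary_sum e k = 2 * / 3 ^ (S k)).
  { destruct k as [|k]; unfold ternary_sum at 1 2; simpl sum_f_R0.
    - unfold ternary_digit. rewrite Hd, He. field.
    - fold (ternary_sum d k) (ternary_sum e k). unfold ternary_digit at 1 2. rewrite Hd, He.
      rewrite (ternary_sum_eq d e k) by (intros; apply H; lia). unfold Rdiv. ring. }
  pose proof (ternary_between d k). pose proof (ternary_between e k). lra.
Qed.

Lemma ternary_agree d e n : Rabs (ternary d - ternary e) < / 3 ^ n ->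
  forall i, (i < n)%nat -> d i = e i.
Proof.
  intros H i. induction i as [i IH] using (well_founded_induction lt_wf). intros Hi.
  destruct (Bool.bool_dec (d i) (e i)) as [E|E]; auto. exfalso.
  pose proof (inv_pow3_le (S i) n Hi). apply Rabs_def2 in H.
  destruct (d i) eqn:Ed, (e i) eqn:Ee; try tauto.
  - pose proof (ternary_separate d e i (fun j Hj => IH j Hj ltac:(lia)) Ed Ee). lra.
  - pose proof (ternary_separate e d i (fun j Hj => eq_sym (IH j Hj ltac:(lia))) Ee Ed). lra.
Qed.

Lemma ternary_inj d e : ternary d = ternary e -> d = e.
Proof.
  intros H. apply functional_extensionality. intros i.
  apply (ternary_agree d e (S i)); [|lia]. rewrite H, Rminus_diag, Rabs_R0. apply inv_pow3_pos.
Qed.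

Lemma Cantor_ternary x : Cantor x <-> exists d, ternary d = x.
Proof.
  split.
  - intros [d Hd]. exists d. exact (UL_sequence _ _ _ (ternary_cv d) Hd).
  - intros [d <-]. exists d. exact (ternary_cv d).
Qed.

Lemma R_open_interior (P : R -> Prop) :
  R_open (fun y => exists eps, 0 < eps /\ forall z, Rabs (z - y) < eps -> P z).
Proof.
  intros y [eps [He H]]. exists (eps / 2). split; [lra|]. intros z Hz.
  exists (eps / 2). split; [lra|]. intros u Hu. apply H.
  pose proof (Rabs_triang (u - z) (z - y)). replace (u - y) with (u - z + (z - y)) by ring. lra.
Qed.

(** * The Cantor tree *)

Section CantorTree.
Variables I W : R -> Prop.
Hypothesis HI : is_open_interval I.
Hypothesis HWI : forall w, W w -> I w.
Hypothesis HWd : dense_in W I.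
Variable code : R -> nat.
Hypothesis code_inj : forall x y, W x -> W y -> code x = code y -> x = y.
Variables a b : R.
Hypothesis Wa : W a.
Hypothesis Wb : W b.
Hypothesis ab : a < b.

Definition W_interval (p : R * R) : Prop := W (fst p) /\ W (snd p) /\ fst p < snd p.

Definition pivot (p : R * R) : R := epsilon (inhabits 0) (fun w =>
  W w /\ fst p < w < snd p /\ forall w', W w' -> fst p < w' < snd p -> (code w <= code w')%nat).

Lemma pivot_spec p : W_interval p ->
  W (pivot p) /\ fst p < pivot p < snd p /\
  forall w', W w' -> fst p < w' < snd p -> (code (pivot p) <= code w')%nat.
Proof.
  intros [H1 [H2 H3]]. unfold pivot. apply epsilon_spec.
  destruct (dec_inh_nat_subset_has_unique_least_element
    (fun n => exists w, W w /\ fst p < w < snd p /\ code w = n)) as [n [[[w [Hw [Hr <-]]] Hmin] _]].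
  - intros n. apply classic.
  - destruct (W_right I W HI HWd (fst p) (snd p) (HWI _ H1) H3) as [w [Hw Hr]].
    exists (code w), w. auto.
  - exists w. split; [auto | split; auto]. intros w' Hw' Hr'. apply Hmin. exists w'. auto.
Qed.

Definition refine (p : R * R) (bit : bool) : R * R :=
  if bit then (pivot p, snd p) else (fst p, pivot p).

Lemma refine_spec p bit : W_interval p ->
  W_interval (refine p bit) /\ fst p <= fst (refine p bit) /\ snd (refine p bit) <= snd p.
Proof.
  intros Hp. destruct (pivot_spec p Hp) as [Hw [Hr _]]. destruct Hp as [H1 [H2 H3]].
  unfold refine, W_interval; destruct bit; simpl; repeat split; auto; lra.
Qed.

Fixpoint path (d : nat -> bool) (n : nat) : R * R :=
  match n with O => (a, b) | S n => refine (path d n) (d n) end.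

Lemma path_W_interval d n : W_interval (path d n).
Proof. induction n; simpl; [repeat split; auto | apply refine_spec; auto]. Qed.

Lemma path_mono d n m : (n <= m)%nat ->
  fst (path d n) <= fst (path d m) /\ snd (path d m) <= snd (path d n).
Proof.
  induction 1; [lra|]. simpl. destruct (refine_spec (path d m) (d m) (path_W_interval d m)). lra.
Qed.

Lemma path_lt d n m : fst (path d n) < snd (path d m).
Proof.
  destruct (path_W_interval d (Nat.max n m)) as [_ [_ H]].
  destruct (path_mono d n (Nat.max n m)); [lia|].
  destruct (path_mono d m (Nat.max n m)); [lia|]. lra.
Qed.

Lemma path_prefix d e n : (forall i, (i < n)%nat -> d i = e i) -> path d n = path e n.
Proof.
  induction n; intros H; simpl; auto. rewrite IHn, H; auto; intros; apply H; lia.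
Qed.

Lemma code_pivot_lt d k : (code (pivot (path d k)) < code (pivot (path d (S k))))%nat.
Proof.
  destruct (pivot_spec _ (path_W_interval d k)) as [Hw [Hr Hmin]].
  destruct (pivot_spec _ (path_W_interval d (S k))) as [Hw' [Hr' _]].
  set (q := pivot (path d (S k))) in *. simpl path in Hr'. unfold refine in Hr'.
  assert (Hin : fst (path d k) < q < snd (path d k)) by (destruct (d k); simpl in Hr'; lra).
  assert (Hne : q <> pivot (path d k)) by (destruct (d k); simpl in Hr'; lra).
  pose proof (Hmin _ Hw' Hin).
  destruct (Nat.eq_dec (code (pivot (path d k))) (code q)) as [E|]; [|lia].
  exfalso. apply Hne, code_inj; auto.
Qed.

Lemma path_excludes d w : W w -> exists n, ~ (fst (path d n) < w < snd (path d n)).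
Proof.
  intros Hw. exists (S (code w)). intros Hin.
  destruct (pivot_spec _ (path_W_interval d (S (code w)))) as [_ [_ Hmin]].
  assert (Hk : forall k, (k <= code (pivot (path d k)))%nat).
  { induction k; [lia|]. pose proof (code_pivot_lt d k). lia. }
  pose proof (Hmin w Hw Hin). pose proof (Hk (S (code w))). lia.
Qed.

Definition in_hat (s : R * tag) : Prop := I (fst s) /\ (W (fst s) \/ snd s = TM).
Definition not_hat (s : R * tag) : Prop := ~ (W (fst s) /\ snd s = TM).
Definition in_seg (p : R * R) (s : R * tag) : Prop := ple (fst p, TR) s /\ ple s (snd p, TL).

Definition digit (s : R * tag) (p : R * R) : bool :=
  if excluded_middle_informative (plt (pivot p, TM) s) then true else false.

Fixpoint address (s : R * tag) (n : nat) : R * R :=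
  match n with O => (a, b) | S n => refine (address s n) (digit s (address s n)) end.

Definition digits (s : R * tag) (n : nat) : bool := digit s (address s n).

Lemma address_path s n : address s n = path (digits s) n.
Proof. induction n; simpl; auto. rewrite <- IHn. auto. Qed.

Lemma in_seg_refine s p : not_hat s -> W_interval p -> in_seg p s ->
  in_seg (refine p (digit s p)) s.
Proof.
  intros Hs Hp [H1 H2]. destruct (pivot_spec p Hp) as [Hw _].
  unfold refine, digit. destruct excluded_middle_informative as [H|H]; simpl.
  - split; [apply plt_TM_ple_TR, H | exact H2].
  - split; [exact H1|]. apply plt_TM_ple_TL.
    destruct (not_plt_ple _ _ H) as [H'|H']; [exact H' | subst s; exfalso; apply Hs; split; auto].
Qed.

Lemma in_seg_path_digits s : not_hat s -> in_seg (a, b) s -> forall n, in_seg (path (digits s) n) s.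
Proof.
  intros Hs Hab n. rewrite <- address_path. induction n; simpl; auto.
  apply in_seg_refine; auto. rewrite address_path. apply path_W_interval.
Qed.

Lemma digit_inside d i s : address s i = path d i ->
  plt (fst (path d (S i)), TM) s -> plt s (snd (path d (S i)), TM) -> digits s i = d i.
Proof.
  unfold digits, digit. intros -> H1 H2. simpl in H1, H2. unfold refine in H1, H2.
  destruct (d i), excluded_middle_informative as [H|H]; simpl in *; auto.
  exfalso. exact (plt_asym _ _ H H2).
Qed.

Lemma digits_inside d n s : plt (fst (path d n), TM) s -> plt s (snd (path d n), TM) ->
  forall i, (i < n)%nat -> digits s i = d i.
Proof.
  intros H1 H2.
  assert (Hin : forall i, (i < n)%nat ->
    plt (fst (path d (S i)), TM) s /\ plt s (snd (path d (S i)), TM)).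
  { intros i Hi. destruct (path_mono d (S i) n Hi) as [M1 M2].
    split; [eapply plt_TM_le_l | eapply plt_TM_le_r]; eauto. }
  assert (Haddr : forall i, (i <= n)%nat -> address s i = path d i).
  { induction i; intros Hi; simpl; auto.
    pose proof (digit_inside d i s (IHi ltac:(lia)) (proj1 (Hin i Hi)) (proj2 (Hin i Hi))) as Hd.
    unfold digits in Hd. rewrite IHi in * by lia. rewrite Hd. reflexivity. }
  intros i Hi. apply digit_inside; [apply Haddr; lia | apply Hin | apply Hin]; auto.
Qed.

Lemma W_TM_between s1 s2 : in_hat s1 -> in_hat s2 -> not_hat s1 -> not_hat s2 -> plt s1 s2 ->
  exists w, W w /\ plt s1 (w, TM) /\ plt (w, TM) s2.
Proof.
  destruct s1 as [x1 t1], s2 as [x2 t2]; unfold in_hat, not_hat, plt; simpl.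
  intros [I1 H1] [I2 H2] N1 N2 [Hlt|[<- Ht]].
  - destruct (W_right I W HI HWd x1 x2 I1 Hlt) as [w [Hw Hr]].
    exists w. split; [auto | split; left; simpl; lra].
  - destruct t1, t2; simpl in Ht; try tauto.
    + destruct H1 as [H1|H1]; [tauto | discriminate].
    + destruct H1 as [H1|H1]; [|discriminate]. exists x1. split; [auto | split; right; simpl; auto].
    + destruct H2 as [H2|H2]; [tauto | discriminate].
Qed.

Lemma digits_separate s1 s2 : in_hat s1 -> in_hat s2 -> not_hat s1 -> not_hat s2 ->
  in_seg (a, b) s1 -> in_seg (a, b) s2 -> plt s1 s2 -> digits s1 <> digits s2.
Proof.
  intros Ih1 Ih2 N1 N2 S1 S2 Hlt E.
  destruct (W_TM_between s1 s2 Ih1 Ih2 N1 N2 Hlt) as [w [Hw [L1 L2]]].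
  destruct (path_excludes (digits s1) w Hw) as [n Hn]. apply Hn.
  destruct (in_seg_path_digits s1 N1 S1 n) as [A _].
  destruct (in_seg_path_digits s2 N2 S2 n) as [_ B]. rewrite <- E in B.
  split; [apply plt_TR_TM, (ple_plt_trans _ s1) | apply plt_TM_TL, (plt_ple_trans _ s2)]; auto.
Qed.

Lemma digits_inj s1 s2 : in_hat s1 -> in_hat s2 -> not_hat s1 -> not_hat s2 ->
  in_seg (a, b) s1 -> in_seg (a, b) s2 -> digits s1 = digits s2 -> s1 = s2.
Proof.
  intros Ih1 Ih2 N1 N2 S1 S2 E.
  destruct (plt_total s1 s2) as [H|[H|H]]; auto; exfalso.
  - exact (digits_separate s1 s2 Ih1 Ih2 N1 N2 S1 S2 H E).
  - exact (digits_separate s2 s1 Ih2 Ih1 N2 N1 S2 S1 H (eq_sym E)).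
Qed.

Definition limit_coord (d : nat -> bool) : R :=
  epsilon (inhabits 0) (fun x => forall n, fst (path d n) <= x <= snd (path d n)).

Lemma limit_coord_between d n : fst (path d n) <= limit_coord d <= snd (path d n).
Proof.
  revert n. unfold limit_coord. apply epsilon_spec.
  set (E := fun x => exists n, x = fst (path d n)).
  assert (Hb : bound E) by (exists b; intros x [n ->]; apply Rlt_le, (path_lt d n 0)).
  destruct (completeness E Hb (ex_intro _ a (ex_intro _ 0%nat eq_refl))) as [x [Hub Hlub]].
  exists x. intros n. split; [apply Hub; exists n; auto|].
  apply Hlub. intros y [m ->]. apply Rlt_le, path_lt.
Qed.

Definition limit_point (d : nat -> bool) : R * tag :=
  (limit_coord d,
   if excluded_middle_informative (W (limit_coord d)) then
     if excluded_middle_informative (exists n, fst (path d n) = limit_coord d) then TR else TL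
   else TM).

Lemma digit_limit_point d n :
  address (limit_point d) n = path d n -> digits (limit_point d) n = d n.
Proof.
  intros E. unfold digits, digit. rewrite E.
  pose proof (limit_coord_between d (S n)) as Hx. simpl in Hx. unfold refine in Hx.
  assert (Hleft : forall m, fst (path d m) < snd (path d (S n))) by (intros; apply path_lt).
  simpl in Hleft. unfold refine in Hleft.
  unfold limit_point. set (x := limit_coord d) in *.
  destruct (d n) eqn:Edn; simpl in Hx, Hleft.
  - destruct excluded_middle_informative as [|C]; auto. exfalso. apply C.
    destruct (proj1 Hx) as [H|H]; [left; simpl; auto|]. right. simpl. split; auto.
    destruct (pivot_spec _ (path_W_interval d n)) as [Hw _]. rewrite H in Hw.
    destruct (excluded_middle_informative (W x)) as [_|C']; [|tauto].
    destruct (excluded_middle_informative (exists m, fst (path d m) = x)) as [_|C']; [simpl; auto|].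
    exfalso. apply C'. exists (S n). simpl. unfold refine. rewrite Edn. auto.
  - destruct excluded_middle_informative as [[H|[H1 H2]]|]; auto; exfalso; simpl in *; [lra|].
    destruct (excluded_middle_informative (W x)); [|auto].
    destruct (excluded_middle_informative (exists m, fst (path d m) = x)) as [[m Hm]|]; [|auto].
    specialize (Hleft m). lra.
Qed.

Lemma limit_point_digits d : digits (limit_point d) = d.
Proof.
  assert (Haddr : forall n, address (limit_point d) n = path d n).
  { induction n; simpl; auto. fold (digits (limit_point d) n).
    rewrite (digit_limit_point d n IHn), IHn. auto. }
  apply functional_extensionality. intros n. apply digit_limit_point, Haddr.
Qed.

Lemma limit_point_spec d :
  in_hat (limit_point d) /\ not_hat (limit_point d) /\ in_seg (a, b) (limit_point d).
Proof.
  pose proof (limit_coord_between d 0) as [Ha Hb]. simpl in Ha, Hb.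
  unfold limit_point, in_hat, not_hat, in_seg; simpl. set (x := limit_coord d) in *.
  split; [split|split].
  - apply (open_interval_convex I HI a b); auto.
  - destruct excluded_middle_informative; auto.
  - destruct excluded_middle_informative; [destruct excluded_middle_informative|];
      simpl; intros [Hw Ht]; try discriminate; tauto.
  - split.
    + destruct Ha as [Ha|Ha]; [left; left; simpl; auto | rewrite <- Ha].
      destruct (excluded_middle_informative (W a)) as [_|]; [|tauto].
      destruct (excluded_middle_informative (exists m, fst (path d m) = a)) as [_|C];
        [right; auto|].
      exfalso. apply C. exists 0%nat. auto.
    + destruct Hb as [Hb|Hb]; [left; left; simpl; auto | rewrite Hb].
      destruct (excluded_middle_informative (W b)) as [_|]; [|tauto].
      destruct (excluded_middle_informative (exists m, fst (path d m) = b)) as [[m Hm]|];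
        [|right; auto].
      exfalso. pose proof (path_lt d m 0). simpl in *. lra.
Qed.

Lemma path_left_end_reaches s w : not_hat s -> in_seg (a, b) s -> W w -> ple (w, TR) s ->
  exists n, w <= fst (path (digits s) n).
Proof.
  intros Hs Hab Hw Hws. destruct (path_excludes (digits s) w Hw) as [n Hn]. exists n.
  destruct (in_seg_path_digits s Hs Hab n) as [_ B].
  pose proof (ple_TR_TL _ _ (ple_trans _ _ _ Hws B)).
  apply Rnot_lt_le. intros Hlt. apply Hn. lra.
Qed.

Lemma path_right_end_reaches s w : not_hat s -> in_seg (a, b) s -> W w -> ple s (w, TL) ->
  exists n, snd (path (digits s) n) <= w.
Proof.
  intros Hs Hab Hw Hsw. destruct (path_excludes (digits s) w Hw) as [n Hn]. exists n.
  destruct (in_seg_path_digits s Hs Hab n) as [A _].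
  pose proof (ple_TR_TL _ _ (ple_trans _ _ _ A Hsw)).
  apply Rnot_lt_le. intros Hlt. apply Hn. lra.
Qed.

Definition Seg : Type := {t : checkI I W | closed_seg I W a b t}.
Definition seg_hat (k : Seg) : hatI I W := proj1_sig (proj1_sig k).
Definition seg_point (k : Seg) : R * tag := hpt (seg_hat k).

Lemma seg_point_spec k :
  in_hat (seg_point k) /\ not_hat (seg_point k) /\ in_seg (a, b) (seg_point k).
Proof. destruct k as [[[p Hp] Hc] Hk]. exact (conj Hp (conj Hc Hk)). Qed.

Lemma seg_point_inj k1 k2 : seg_point k1 = seg_point k2 -> k1 = k2.
Proof.
  intros E. do 3 (apply eq_sig_hprop; [intros; apply proof_irrelevance|]). exact E.
Qed.

Lemma seg_digits_surj d : exists k, digits (seg_point k) = d.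
Proof.
  destruct (limit_point_spec d) as [Hh [Hn Hs]].
  exists (exist _ (exist _ (exist _ (limit_point d) Hh) Hn) Hs). apply limit_point_digits.
Qed.

Lemma seg_openP V : subspace (check_open I W) (closed_seg I W a b) V <-> locally_basic seg_hat V.
Proof. exact (subspace_locally_basic _ _ _ (check_openP I W) V). Qed.

Definition Cantor_set : Type := {x : R | Cantor x}.

Definition to_cantor (k : Seg) : Cantor_set :=
  exist _ (ternary (digits (seg_point k))) (proj2 (Cantor_ternary _) (ex_intro _ _ eq_refl)).

Definition cantor_digits (x : Cantor_set) : nat -> bool :=
  proj1_sig (constructive_indefinite_description _ (proj1 (Cantor_ternary _) (proj2_sig x))).

Lemma ternary_cantor_digits x : ternary (cantor_digits x) = proj1_sig x.
Proof. unfold cantor_digits. destruct constructive_indefinite_description; auto. Qed.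

Definition from_cantor (x : Cantor_set) : Seg :=
  proj1_sig (constructive_indefinite_description _ (seg_digits_surj (cantor_digits x))).

Lemma digits_from_cantor x : digits (seg_point (from_cantor x)) = cantor_digits x.
Proof. unfold from_cantor. destruct constructive_indefinite_description; auto. Qed.

Lemma from_to_cantor k : from_cantor (to_cantor k) = k.
Proof.
  apply seg_point_inj.
  destruct (seg_point_spec (from_cantor (to_cantor k))) as [H1 [H2 H3]].
  destruct (seg_point_spec k) as [H1' [H2' H3']].
  apply digits_inj; auto. rewrite digits_from_cantor. apply ternary_inj.
  rewrite ternary_cantor_digits. reflexivity.
Qed.

Lemma to_from_cantor x : to_cantor (from_cantor x) = x.
Proof.
  apply eq_sig_hprop; [intros; apply proof_irrelevance|]. simpl.
  rewrite digits_from_cantor. apply ternary_cantor_digits.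
Qed.

Lemma to_cantor_continuous :
  continuous (subspace (check_open I W) (closed_seg I W a b)) (subspace R_open Cantor) to_cantor.
Proof.
  intros V [U [HU HV]]. apply seg_openP. intros k Hk%HV.
  destruct (HU _ Hk) as [eps [He Hball]]. destruct (inv_pow3_small eps He) as [n Hn].
  set (d := digits (seg_point k)).
  destruct (path_W_interval d n) as [Wl [Wr _]].
  destruct (seg_point_spec k) as [_ [Hs Hab]].
  destruct (in_seg_path_digits _ Hs Hab n) as [A B].
  assert (Hin : oint (Pt (hat_of I W _ (HWI _ Wl))) (Pt (hat_of I W _ (HWI _ Wr))) (seg_hat k))
    by (split; [apply ple_TR_plt_TM, A | apply ple_TL_plt_TM, B]).
  exists (Pt (hat_of I W _ (HWI _ Wl))), (Pt (hat_of I W _ (HWI _ Wr))).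
  split; [eapply basis_interval_hat; eauto | split; auto].
  intros k' [H1 H2]. apply HV, Hball.
  pose proof (ternary_close _ d n (digits_inside d n (seg_point k') H1 H2)). simpl. fold d. lra.
Qed.

Lemma from_cantor_continuous :
  continuous (subspace R_open Cantor) (subspace (check_open I W) (closed_seg I W a b)) from_cantor.
Proof.
  intros V HV.
  exists (fun y => exists eps, 0 < eps /\ forall z, Rabs (z - y) < eps ->
    forall x : Cantor_set, proj1_sig x = z -> V (from_cantor x)).
  split; [apply R_open_interior|]. intros x. split.
  - intros Hx. set (k := from_cantor x) in *.
    destruct (proj1 (seg_openP V) HV k Hx) as [p [q [[_ [Hp Hq]] [[Hpk Hkq] Hall]]]].
    destruct (basis_interval_lower_W I W HI HWd p _ Hp Hpk) as [l [Wl [Hl Hl']]].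
    destruct (basis_interval_upper_W I W HI HWd q _ Hq Hkq) as [r [Wr [Hr Hr']]].
    destruct (seg_point_spec k) as [_ [Hs Hab]].
    destruct (path_left_end_reaches _ l Hs Hab Wl Hl) as [n1 Hn1].
    destruct (path_right_end_reaches _ r Hs Hab Wr Hr) as [n2 Hn2].
    set (n := Nat.max n1 n2).
    exists (/ 3 ^ n). split; [apply inv_pow3_pos|]. intros z Hz x' <-. apply Hall.
    assert (Hpath :
      path (digits (seg_point (from_cantor x'))) n = path (digits (seg_point k)) n).
    { unfold k. rewrite !digits_from_cantor. apply path_prefix, ternary_agree.
      rewrite !ternary_cantor_digits. exact Hz. }
    destruct (seg_point_spec (from_cantor x')) as [_ [Hs' Hab']].
    destruct (in_seg_path_digits _ Hs' Hab' n) as [A B]. rewrite Hpath in A, B.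
    destruct (path_mono (digits (seg_point k)) n1 n) as [M1 _]; [lia|].
    destruct (path_mono (digits (seg_point k)) n2 n) as [_ M2]; [lia|].
    split; [apply Hl' | apply Hr'].
    + exact (ple_trans _ _ _ (ple_same_tag _ _ TR (Rle_trans _ _ _ Hn1 M1)) A).
    + exact (ple_trans _ _ _ B (ple_same_tag _ _ TL (Rle_trans _ _ _ M2 Hn2))).
  - intros [eps [He H]]. apply (H (proj1_sig x)); auto. rewrite Rminus_diag, Rabs_R0. exact He.
Qed.

Lemma closed_seg_homeomorphic_Cantor :
  homeomorphic (subspace (check_open I W) (closed_seg I W a b)) (subspace R_open Cantor).
Proof.
  exists to_cantor, from_cantor.
  split; [exact from_to_cantor | split; [exact to_from_cantor|]].
  split; [exact to_cantor_continuous | exact from_cantor_continuous].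
Qed.

End CantorTree.

Lemma countable_code (W : R -> Prop) : countable_set W ->
  exists code : R -> nat, forall x y, W x -> W y -> code x = code y -> x = y.
Proof.
  intros [f Hf].
  exists (fun x => match excluded_middle_informative (W x) with
                   | left Hx => f (exist _ x Hx) | right _ => 0%nat end).
  intros x y Hx Hy.
  destruct (excluded_middle_informative (W x)); [|tauto].
  destruct (excluded_middle_informative (W y)); [|tauto].
  intros E. apply Hf in E. injection E; auto.
Qed.

Theorem proposition3p8 (I W : R -> Prop)
  (HI : is_open_interval I)
  (HWI : forall w, W w -> I w)
  (HWc : countable_set W)
  (HWd : dense_in W I) :
  ((forall a b, W a -> W b -> a < b -> check_open I W (closed_seg I W a b)) /\
   (forall V, check_open I W V -> forall s, V s ->
      exists a b, W a /\ W b /\ a < b /\ closed_seg I W a b s /\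
        forall t, closed_seg I W a b t -> V t)) /\
  (forall a b, W a -> W b -> a < b ->
     homeomorphic (subspace (check_open I W) (closed_seg I W a b))
                  (subspace R_open Cantor)).
Proof.
  split; [split|].
  - intros a b Wa Wb _. apply closed_seg_open; auto.
  - apply closed_seg_basis; auto.
  - intros a b Wa Wb ab. destruct (countable_code W HWc) as [code Hcode].
    exact (closed_seg_homeomorphic_Cantor I W HI HWI HWd code Hcode a b Wa Wb ab).
Qed.
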